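(* Let $n\ge2$, let $A_1,\dots,A_n$ be nonzero real $n\times n$ matrices, and let $G_B$ be as in the context. (i) If there is $\lambda>0$ such that $\|A_i-\lambda I_n\|_{\mathrm{op}}\le\lambda/4$ for all $i=1,\dots,n$, then $G_B$ is monotone. (ii) If there is $\lambda>0$ such that $\|A_i-\lambda I_n\|_{\mathrm{op}}<\lambda/4$ for all $i=1,\dots,n$, then $G_B$ is $3$-monotone.
   Context: $B(u,v,w)=\mathrm{diag}[u^TA_1v,\dots,u^TA_nv]\,w$ for $u,v,w\in\mathbb R^n$; $G_B(0)=0$ and $G_B(u)=B(u,u,u)/|u|$ for $u\ne0$, with $|\cdot|$ the Euclidean norm. $\|A\|_{\mathrm{op}}=\max_{|x|=1}|Ax|$. A map $F:\mathbb R^n\to\mathbb R^n$ is monotone if $(F(u)-F(v))\cdot(u-v)\ge0$ for all $u,v$; for $\alpha>0$ it is $\alpha$-monotone if there is $C>0$ with $(F(u)-F(v))\cdot(u-v)\ge C|u-v|^\alpha$ for all $u,v$. *)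

From HB Require Import structures.
From mathcomp Require Import all_boot all_order all_algebra.
From mathcomp Require Import all_classical all_reals exp.
Set Implicit Arguments. Unset Strict Implicit. Unset Printing Implicit Defensive.
Import Order.TTheory GRing.Theory Num.Theory.
Local Open Scope ring_scope.
Local Open Scope classical_set_scope.

Definition dotv (R : realType) (n : nat) (u v : 'cV[R]_n) : R :=
  \sum_(i < n) u i 0 * v i 0.

Definition enorm (R : realType) (n : nat) (u : 'cV[R]_n) : R :=
  Num.sqrt (dotv u u).

Definition opnorm (R : realType) (n : nat) (A : 'M[R]_n) : R :=
  sup [set enorm (A *m x) | x in [set x : 'cV[R]_n | enorm x = 1]].

Definition bil (R : realType) (n : nat) (A : 'M[R]_n) (u v : 'cV[R]_n) : R :=
  (u^T *m A *m v) 0 0.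

Definition Bmap (R : realType) (n : nat) (A : 'I_n -> 'M[R]_n)
  (u v w : 'cV[R]_n) : 'cV[R]_n :=
  \col_(i < n) (bil (A i) u v * w i 0).

Definition GB (R : realType) (n : nat) (A : 'I_n -> 'M[R]_n)
  (u : 'cV[R]_n) : 'cV[R]_n :=
  if u == 0 then 0 else (enorm u)^-1 *: Bmap A u u u.

Definition monotone (R : realType) (n : nat) (F : 'cV[R]_n -> 'cV[R]_n) :=
  forall u v : 'cV[R]_n, 0 <= dotv (F u - F v) (u - v).

Definition alpha_monotone (R : realType) (n : nat) (alpha : R)
  (F : 'cV[R]_n -> 'cV[R]_n) :=
  exists C : R, 0 < C /\
    forall u v : 'cV[R]_n, C * powR (enorm (u - v)) alpha <= dotv (F u - F v) (u - v).

From HB Require Import structures.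
From mathcomp Require Import all_boot all_order all_algebra.
From mathcomp Require Import all_classical all_reals exp.
From mathcomp Require Import ring lra.
Import Order.TTheory GRing.Theory Num.Theory.
Set Implicit Arguments. Unset Strict Implicit.
Local Open Scope ring_scope.

(* Write E_i = A_i - lambda I and, for u <> 0, a_i(u) = u^T E_i u / |u|.  Then
   G_B(u) = lambda |u| u + diag[a_1(u), ..., a_n(u)] u, i.e. G_B is a
   perturbation of the radial map u |-> lambda |u| u.  If ||E_i|| <= r then
   (1) the radial map satisfies
         <|u| u - |v| v, u - v> >= (|u| + |v|)/2 |u - v|^2;
   (2) |a_i(u)| <= r |u| and |a_i(u) - a_i(v)| <= 3 r |u - v|, so the diagonal
       perturbation contributes at least -2 r (|u| + |v|) |u - v|^2.
   Together they give the coercivity estimate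
         <G_B(u) - G_B(v), u - v> >= (lambda - 4 r)/2 (|u| + |v|) |u - v|^2.
   With r = lambda/4 this is monotonicity; with r < lambda/4 (r the largest
   of the ||E_i||) and |u| + |v| >= |u - v| it is 3-monotonicity. *)

Section EuclideanGeometry.
Variables (R : realType) (n : nat).
Implicit Types (u v w : 'cV[R]_n) (E : 'M[R]_n).

Lemma dotvC u v : dotv u v = dotv v u.
Proof. by apply: eq_bigr => i _; rewrite mulrC. Qed.

Lemma dotvDr u v w : dotv u (v + w) = dotv u v + dotv u w.
Proof. by rewrite /dotv -big_split; apply: eq_bigr => i _; rewrite !mxE mulrDr. Qed.

Lemma dotvBr u v w : dotv u (v - w) = dotv u v - dotv u w.
Proof. by rewrite /dotv -sumrB; apply: eq_bigr => i _; rewrite !mxE mulrBr. Qed.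

Lemma dotvZr (k : R) u v : dotv u (k *: v) = k * dotv u v.
Proof. by rewrite /dotv mulr_sumr; apply: eq_bigr => i _; rewrite !mxE mulrCA. Qed.

Lemma dotvDl u v w : dotv (v + w) u = dotv v u + dotv w u.
Proof. by rewrite dotvC dotvDr !(dotvC u). Qed.

Lemma dotvBl u v w : dotv (v - w) u = dotv v u - dotv w u.
Proof. by rewrite dotvC dotvBr !(dotvC u). Qed.

Lemma dotvZl (k : R) u v : dotv (k *: u) v = k * dotv u v.
Proof. by rewrite dotvC dotvZr dotvC. Qed.

Lemma dotv0r u : dotv u 0 = 0.
Proof. by rewrite /dotv big1 // => i _; rewrite mxE mulr0. Qed.

Lemma dotv_sumsq u : dotv u u = \sum_i u i 0 ^+ 2.
Proof. by apply: eq_bigr => i _; rewrite expr2. Qed.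

Lemma dotv_ge0 u : 0 <= dotv u u.
Proof. by rewrite dotv_sumsq sumr_ge0 // => i _; rewrite sqr_ge0. Qed.

Lemma enorm_ge0 u : 0 <= enorm u.
Proof. exact: sqrtr_ge0. Qed.

Lemma enorm_sq u : enorm u ^+ 2 = dotv u u.
Proof. by rewrite /enorm sqr_sqrtr // dotv_ge0. Qed.

Lemma enorm0 : enorm (0 : 'cV[R]_n) = 0.
Proof. by rewrite /enorm dotv0r sqrtr0. Qed.

Lemma enorm_eq0 u : enorm u = 0 -> u = 0.
Proof.
move=> u0; have /psumr_eq0P coord0 : \sum_i u i 0 ^+ 2 = 0.
  by rewrite -dotv_sumsq -enorm_sq u0 expr0n.
apply/matrixP => i j; rewrite ord1 mxE; apply/eqP.
by rewrite -sqrf_eq0 coord0 // => k _; rewrite sqr_ge0.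
Qed.

Lemma enormZ (k : R) u : enorm (k *: u) = `|k| * enorm u.
Proof. by rewrite /enorm dotvZl dotvZr mulrA -expr2 sqrtrM ?sqr_ge0 ?sqrtr_sqr. Qed.

Lemma enorm_le u (y : R) : 0 <= y -> dotv u u <= y ^+ 2 -> enorm u <= y.
Proof. by move=> y0 uy; rewrite -(ger0_norm y0) -sqrtr_sqr ler_sqrt ?sqr_ge0. Qed.

Lemma CauchySchwarz u v : `|dotv u v| <= enorm u * enorm v.
Proof.
suff sq : dotv u v ^+ 2 <= dotv u u * dotv v v.
  by rewrite -sqrtr_sqr -sqrtrM ?dotv_ge0 // ler_sqrt // mulr_ge0 ?dotv_ge0.
set a := dotv v v; set b := dotv u v; set c := dotv u u.
have quad k : 0 <= c - 2 * k * b + k ^+ 2 * a.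
  have := dotv_ge0 (u - k *: v).
  rewrite dotvBl !dotvBr !dotvZl !dotvZr (dotvC v u) -/a -/b -/c.
  by congr (_ <= _); ring.
have [a0|a_neq0] := eqVneq a 0.
  have v0 : v = 0 by apply: enorm_eq0; rewrite /enorm -/a a0 sqrtr0.
  by rewrite /b v0 dotv0r expr0n mulr_ge0 ?dotv_ge0.
have a_gt0 : 0 < a by rewrite lt_def a_neq0 dotv_ge0.
have := quad (b / a); have ab : b / a * a = b by rewrite divfK.
nra.
Qed.

Lemma enormD_le u v : enorm (u + v) <= enorm u + enorm v.
Proof.
apply: enorm_le; first by rewrite addr_ge0 ?enorm_ge0.
have := CauchySchwarz u v; rewrite ler_norml => /andP[_ uv].
rewrite dotvDl !dotvDr (dotvC v u) -!enorm_sq; nra.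
Qed.

Lemma enormN u : enorm (- u) = enorm u.
Proof. by rewrite -scaleN1r enormZ normrN1 mul1r. Qed.

Lemma enorm_dist u v : `|enorm u - enorm v| <= enorm (u - v).
Proof.
have tri (x y : 'cV[R]_n) : enorm x - enorm y <= enorm (x - y).
  by rewrite lerBlDr; have := enormD_le (x - y) y; rewrite subrK.
rewrite ler_norml tri andbT lerNl opprB -(enormN (u - v)) opprB; exact: tri.
Qed.

(* The operator norm bounds the stretching of every vector.  The supremum
   defining opnorm exists since each |E y| with |y| = 1 is bounded by the
   norm of the vector of row norms of E. *)
Lemma opnorm_ub E u : enorm (E *m u) <= opnorm E * enorm u.
Proof.
have [->|u_neq0] := eqVneq u 0; first by rewrite mulmx0 enorm0 mulr0.
have u_gt0 : 0 < enorm u.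
  by rewrite lt_def enorm_ge0 andbT; apply: contra u_neq0 => /eqP/enorm_eq0 ->.
pose rows : 'cV[R]_n := \col_i enorm (row i E)^T.
have bounded y : enorm y = 1 -> enorm (E *m y) <= enorm rows.
  move=> y1; apply: enorm_le (enorm_ge0 _) _.
  rewrite enorm_sq !dotv_sumsq; apply: ler_sum => i _.
  have -> : (E *m y) i 0 = dotv (row i E)^T y.
    by rewrite mxE; apply: eq_bigr => j _; rewrite !mxE.
  rewrite mxE.
  have := CauchySchwarz (row i E)^T y; rewrite y1 mulr1 => cs.
  by rewrite -real_normK ?num_real // lerXn2r ?nnegrE ?enorm_ge0.
set y := (enorm u)^-1 *: u.
have y1 : enorm y = 1 by rewrite enormZ ger0_norm ?invr_ge0 ?enorm_ge0 // mulVf ?gt_eqF.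
have Ey : enorm (E *m u) = enorm u * enorm (E *m y).
  by rewrite /y -scalemxAr enormZ ger0_norm ?invr_ge0 ?enorm_ge0 // mulrA divff ?gt_eqF ?mul1r.
have has_supS : has_sup [set enorm (E *m x) | x in [set x | enorm x = 1]].
  split; first by exists (enorm (E *m y)), y.
  by exists (enorm rows) => _ [x /= x1 <-]; exact: bounded.
rewrite Ey mulrC ler_pM2r //.
exact: sup_upper_bound has_supS _ (ex_intro2 _ _ y y1 erefl).
Qed.

End EuclideanGeometry.

(* This is the scalar core of the Lipschitz bound on the perturbation. *)
Lemma lipschitz_of_scaled (F : realFieldType) (r s t W a b : F) :
  0 <= r -> 0 <= s -> 0 <= t -> `|s - t| <= W ->
  `|a| <= r * s -> `|b| <= r * t -> `|a * s - b * t| <= r * W * (s + t) ->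
  `|a - b| <= 3 * r * W.
Proof.
move=> r0 s0 t0 stW ha hb hab.
have W0 : 0 <= W := le_trans (normr_ge0 _) stW.
have ab_sum : `|a - b| <= r * (s + t).
  by rewrite mulrDr (le_trans (ler_normB a b)) // lerD.
have [st0|st_neq0] := eqVneq (s + t) 0.
  by rewrite st0 mulr0 in ab_sum; rewrite (le_trans ab_sum) // !mulr_ge0.
have st_gt0 : 0 < s + t by rewrite lt_def st_neq0 addr_ge0.
rewrite -(ler_pM2l st_gt0).
have -> : (s + t) * `|a - b| = `|2 * (a * s - b * t) + (a + b) * (t - s)|.
  by rewrite -[s + t in LHS]ger0_norm ?(ltW st_gt0) // -normrM; congr `|_|; ring.
have ab_plus : `|a + b| <= r * (s + t).
  by rewrite mulrDr (le_trans (ler_normD a b)) // lerD.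
have perturb : `|(a + b) * (t - s)| <= r * (s + t) * W.
  by rewrite normrM distrC ler_pM.
rewrite (le_trans (ler_normD _ _)) // normrM ger0_norm //; lra.
Qed.

Section RayleighCoefficient.
Variables (R : realType) (n : nat) (E : 'M[R]_n) (r : R).
Implicit Types u v : 'cV[R]_n.

Lemma bil_dot u v : bil E u v = dotv u (E *m v).
Proof. by rewrite /bil -mulmxA mxE; apply: eq_bigr => i _; rewrite mxE. Qed.

Definition rq u : R := bil E u u / enorm u.

Lemma rq_mulr u : rq u * enorm u = bil E u u.
Proof.
have [u0|u_neq0] := eqVneq (enorm u) 0; last by rewrite divfK.
by rewrite u0 mulr0 (enorm_eq0 u0) bil_dot dotvC dotv0r.
Qed.

Hypotheses (r_ge0 : 0 <= r) (E_le : forall x : 'cV[R]_n, enorm (E *m x) <= r * enorm x).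

Lemma bil_bound u v : `|bil E u v| <= r * enorm u * enorm v.
Proof.
rewrite bil_dot (le_trans (CauchySchwarz _ _)) // mulrAC mulrC.
by rewrite ler_wpM2r ?enorm_ge0.
Qed.

Lemma rq_bound u : `|rq u| <= r * enorm u.
Proof.
have [u0|u_neq0] := eqVneq (enorm u) 0.
  by rewrite /rq u0 invr0 mulr0 normr0 mulr0.
have u_gt0 : 0 < enorm u by rewrite lt_def u_neq0 enorm_ge0.
by rewrite -(ler_pM2r u_gt0) -{1}(ger0_norm (ltW u_gt0)) -normrM rq_mulr bil_bound.
Qed.

Lemma bil_diff u v :
  `|bil E u u - bil E v v| <= r * enorm (u - v) * (enorm u + enorm v).
Proof.
have -> : bil E u u - bil E v v = bil E (u - v) u + bil E v (u - v).
  by rewrite !bil_dot mulmxBr dotvBl dotvBr addrA subrK.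
rewrite mulrDr (le_trans (ler_normD _ _)) // lerD ?bil_bound //.
by rewrite mulrAC (le_trans (bil_bound _ _)) // mulrAC.
Qed.

Lemma rq_lipschitz u v : `|rq u - rq v| <= 3 * r * enorm (u - v).
Proof.
apply: lipschitz_of_scaled (enorm_ge0 u) (enorm_ge0 v) (enorm_dist u v) _ _ _ => //.
- exact: rq_bound.
- exact: rq_bound.
- by rewrite !rq_mulr bil_diff.
Qed.

End RayleighCoefficient.

Section CubicMap.
Variables (R : realType) (n : nat).
Implicit Types u v w : 'cV[R]_n.

(* The radial map u |-> |u| u is strongly monotone with weight (|u|+|v|)/2:
   the defect is exactly (|u| + |v|) (|u| - |v|)^2 / 2. *)
Lemma radial_monotone u v :
  (enorm u + enorm v) / 2 * enorm (u - v) ^+ 2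
    <= dotv (enorm u *: u - enorm v *: v) (u - v).
Proof.
have s0 := enorm_ge0 u; have t0 := enorm_ge0 v.
rewrite enorm_sq !dotvBl !dotvBr !dotvZl (dotvC v u) -!enorm_sq.
have := mulr_ge0 (addr_ge0 s0 t0) (sqr_ge0 (enorm u - enorm v)); nra.
Qed.

Definition dscale (a : 'I_n -> R) u : 'cV[R]_n := \col_i (a i * u i 0).

Definition absv w : 'cV[R]_n := map_mx Num.norm w.

Lemma enorm_absv w : enorm (absv w) = enorm w.
Proof.
by rewrite /enorm !dotv_sumsq; congr Num.sqrt; apply: eq_bigr => i _;
  rewrite mxE real_normK ?num_real.
Qed.

(* Lower bound for a difference of two diagonal scalings: with the splitting
   a x - b y = (a + b)/2 (x - y) + (a - b)/2 (x + y), only a lower bound on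
   a_i + b_i and an upper bound on |a_i - b_i| are needed. *)
Lemma dscale_perturbation (a b : 'I_n -> R) (rho delta : R) u v :
  0 <= delta -> (forall i, - rho <= a i + b i) ->
  (forall i, `|a i - b i| <= delta) ->
  - (rho / 2 * enorm (u - v) ^+ 2 + delta / 2 * (enorm (u - v) * enorm (u + v)))
    <= dotv (dscale a u - dscale b v) (u - v).
Proof.
move=> delta0 ab_sum ab_diff.
have pointwise i :
    - (rho / 2 * ((u - v) i 0 * (u - v) i 0)
       + delta / 2 * (absv (u - v) i 0 * absv (u + v) i 0))
    <= (dscale a u - dscale b v) i 0 * (u - v) i 0.
  rewrite !mxE; set x := u i 0; set y := v i 0.
  have mixed : - (delta * (`|x - y| * `|x + y|)) <= (a i - b i) * ((x - y) * (x + y)).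
    rewrite lerNl (le_trans (ler_norm _)) // normrN !normrM ler_wpM2r //.
    by rewrite mulr_ge0.
  have square := ler_wpM2r (sqr_ge0 (x - y)) (ab_sum i).
  have -> : (a i * x - b i * y) * (x - y) =
    (a i + b i) / 2 * ((x - y) * (x - y)) + (a i - b i) * ((x - y) * (x + y)) / 2.
    by field.
  rewrite -expr2 in square *; lra.
have cs := CauchySchwarz (absv (u - v)) (absv (u + v)).
rewrite !enorm_absv in cs.
apply: le_trans (_ : - (rho / 2 * dotv (u - v) (u - v)
    + delta / 2 * dotv (absv (u - v)) (absv (u + v))) <= _).
  rewrite enorm_sq lerN2 lerD2l ler_wpM2l ?divr_ge0 //.
  exact: le_trans (ler_norm _) cs.
rewrite /dotv !mulr_sumr -big_split -sumrN; apply: ler_sum => i _.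
exact: pointwise.
Qed.

Lemma GB_decomp (A : 'I_n -> 'M[R]_n) (lam : R) u :
  GB A u = (lam * enorm u) *: u + dscale (fun i => rq (A i - lam%:M) u) u.
Proof.
apply/matrixP => i j; rewrite ord1 /GB.
have [->|u_neq0] := eqVneq u 0; first by rewrite !mxE !mulr0 addr0.
have s_neq0 : enorm u != 0 by apply: contra u_neq0 => /eqP/enorm_eq0 ->.
have shift : bil (A i - lam%:M) u u = bil (A i) u u - lam * enorm u ^+ 2.
  by rewrite !bil_dot mulmxBl mul_scalar_mx dotvBr dotvZr enorm_sq.
by rewrite !mxE /rq shift; field.
Qed.

Theorem GB_coercive (A : 'I_n -> 'M[R]_n) (lam r : R) :
  0 <= lam -> 0 <= r ->
  (forall i x, enorm ((A i - lam%:M) *m x) <= r * enorm x) ->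
  forall u v, (lam - 4 * r) / 2 * (enorm u + enorm v) * enorm (u - v) ^+ 2
    <= dotv (GB A u - GB A v) (u - v).
Proof.
move=> lam0 r0 E_le u v.
set s := enorm u; set t := enorm v; set W := enorm (u - v).
pose a i := rq (A i - lam%:M) u; pose b i := rq (A i - lam%:M) v.
have -> : dotv (GB A u - GB A v) (u - v) =
    lam * dotv (s *: u - t *: v) (u - v) + dotv (dscale a u - dscale b v) (u - v).
  by rewrite (GB_decomp A lam u) (GB_decomp A lam v) opprD addrACA
    -!scalerA -scalerBr [LHS]dotvDl dotvZl.
have radial := ler_wpM2l lam0 (radial_monotone u v).
have ab_sum i : - (r * (s + t)) <= a i + b i.
  have := rq_bound (E_le i) u; have := rq_bound (E_le i) v.
  rewrite /a /b !ler_norml -/s -/t => /andP[bl _] /andP[al _]; lra.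
have ab_diff i : `|a i - b i| <= 3 * r * W := rq_lipschitz r0 (E_le i) u v.
have delta0 : 0 <= 3 * r * W by rewrite !mulr_ge0 ?enorm_ge0.
have := dscale_perturbation u v delta0 ab_sum ab_diff.
have sum_le : 3 * r * W / 2 * (W * enorm (u + v)) <= 3 * r * W / 2 * (W * (s + t)).
  by rewrite ler_wpM2l ?divr_ge0 // ler_wpM2l ?enorm_ge0 // enormD_le.
rewrite -/s -/t -/W in radial *; lra.
Qed.

End CubicMap.

(* Part (i) is the coercivity estimate with r = lambda/4; part (ii) uses
   r = max_i ||A_i - lambda I|| < lambda/4 and |u - v| <= |u| + |v|. *)
Theorem mainTheorem7 (R : realType) (n : nat) (A : 'I_n -> 'M[R]_n) :
  (2 <= n)%N ->
  (forall i, A i != 0) ->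
  ((exists lambda : R, 0 < lambda /\
      forall i, opnorm (A i - lambda%:M) <= lambda / 4) ->
     monotone (GB A))
  /\
  ((exists lambda : R, 0 < lambda /\
      forall i, opnorm (A i - lambda%:M) < lambda / 4) ->
     alpha_monotone 3 (GB A)).
Proof.
move=> _ _; split.
  case=> lam [lam_gt0 near_lam] u v.
  have E_le i x : enorm ((A i - lam%:M) *m x) <= lam / 4 * enorm x.
    by rewrite (le_trans (opnorm_ub _ _)) // ler_wpM2r ?enorm_ge0.
  have := GB_coercive (ltW lam_gt0) (divr_ge0 (ltW lam_gt0) (ler0n R 4)) E_le u v.
  have -> : lam - 4 * (lam / 4) = 0 by field.
  by rewrite !mul0r.
case=> lam [lam_gt0 near_lam].
set r := \big[Order.max/0]_i opnorm (A i - lam%:M).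
have r_ge0 : 0 <= r := bigmax_ge_id _ _ _ _.
have r_lt : r < lam / 4 by apply: bigmax_lt => [|i _]; rewrite ?divr_gt0.
have E_le i x : enorm ((A i - lam%:M) *m x) <= r * enorm x.
  by rewrite (le_trans (opnorm_ub _ _)) // ler_wpM2r ?enorm_ge0 ?le_bigmax.
exists ((lam - 4 * r) / 2); split; first by rewrite divr_gt0 //; lra.
move=> u v; apply: le_trans (GB_coercive (ltW lam_gt0) r_ge0 E_le u v).
have W_le := enormD_le u (- v); rewrite enormN in W_le.
rewrite powR_mulrn ?enorm_ge0 // -[in leRHS]mulrA.
rewrite ler_wpM2l ?divr_ge0 //; first by lra.
by rewrite exprS ler_wpM2r ?exprn_ge0 ?enorm_ge0.
Qed.
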